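(* Let $P$, $G$, $G_0$ be as in the context, and set $R(z)=(G-z)^{-1}$, $R_0(z)=(G_0-z)^{-1}$, $V=G_0-G$. For every $k\in\mathbb N$, $k\geq1$, and $z\in\mathbb C\setminus\mathbb R$, $R(z)^k$ is a finite sum of terms of the form \[M_0VM_1V\cdots VM_n,\] where $M_0=R_0(z)^{\alpha_0}$, $M_n=R_0(z)^{\alpha_n}$, and for $1\leq j\leq n-1$ either $M_j=R(z)$ (in which case one sets $\alpha_j=1$) or $M_j=R_0(z)^{\alpha_j}$; moreover the integers $\alpha_j$ satisfy, for all $j\in\{0,\dots,n\}$, $0<\alpha_j\leq k$, $\alpha_j+\alpha_{j+1}\leq k+1$ (for $j<n$), and $\sum_{j=0}^n\alpha_j=n+k$.
   Context: On $\mathbb R^d$, $P=-b\,\mathrm{div}(A\nabla b)$ with smooth real $b\geq\delta>0$ and smooth real symmetric $A\geq\delta I_d$, whose coefficients satisfy $|\partial^\alpha(A-I_d)|+|\partial^\alpha(b-1)|\lesssim\langle x\rangle^{-\rho-|\alpha|}$ for some $\rho>0$. $G=i\begin{pmatrix}0&1\\-P&0\end{pmatrix}$, $G_0=i\begin{pmatrix}0&1\\ \Delta&0\end{pmatrix}$, so $V=G_0-G=i\begin{pmatrix}0&0\\P+\Delta&0\end{pmatrix}$, a bounded operator $H^{s+1}\oplus H^s\to H^s\oplus H^{s-1}$. *)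

From mathcomp Require Import all_boot all_order all_algebra.
Set Implicit Arguments. Unset Strict Implicit. Unset Printing Implicit Defensive.
Import Order.TTheory GRing.Theory Num.Theory.
Local Open Scope ring_scope.

(* A factor M_j of a word M_0 V M_1 V ... V M_n:
   FR0 a  stands for R_0(z)^a,   FR stands for R(z) (with alpha = 1). *)
Inductive factor := FR0 of nat | FR.

Definition alpha (f : factor) : nat :=
  match f with FR0 a => a | FR => 1%N end.

Definition is_R0 (f : factor) : bool :=
  match f with FR0 _ => true | FR => false end.

Definition valid_word (k : nat) (ms : seq factor) : Prop :=
  [/\ ms <> [::],
      is_R0 (head FR ms) /\ is_R0 (last FR ms),
      (forall j, (j < size ms)%N -> (0 < alpha (nth FR ms j) <= k)%N),
      (forall j, (j.+1 < size ms)%N ->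
         (alpha (nth FR ms j) + alpha (nth FR ms j.+1) <= k.+1)%N)
    & sumn (map alpha ms) = ((size ms).-1 + k)%N].

Section Eval.
Variable A : pzRingType.
Variables (R R0 V : A).

Definition eval_factor (f : factor) : A :=
  match f with FR0 a => R0 ^+ a | FR => R end.

Fixpoint eval_word (ms : seq factor) : A :=
  match ms with
  | [::] => 1
  | [:: m] => eval_factor m
  | m :: ms' => eval_factor m * V * eval_word ms'
  end.
End Eval.

From mathcomp Require Import all_boot all_order all_algebra.
From mathcomp Require Import zify.
Set Implicit Arguments. Unset Strict Implicit. Unset Printing Implicit Defensive.
Import Order.TTheory GRing.Theory Num.Theory.
Local Open Scope ring_scope.

(* By the second resolvent identity R = R0 + R0 V R0 + R0 V R V R0, right
   multiplication by R sends a word ending in R0^a to the sum of the three words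
   obtained by replacing R0^a with R0^(a+1), R0^(a+1) V R0 and R0^(a+1) V R V R0.
   Raising the last exponent by one raises k by one, and the appended factors
   all have alpha = 1, so admissibility at level k passes to level k+1; induction
   on k then expands R^k. *)

Definition alpha_bounded (k : nat) (f : factor) : bool := (0 < alpha f <= k)%N.

Definition alpha_adjacent (k : nat) (f g : factor) : bool :=
  (alpha f + alpha g <= k.+1)%N.

Lemma valid_wordP k ms :
  valid_word k ms <->
  [/\ ms <> [::], is_R0 (head FR ms) /\ is_R0 (last FR ms),
      all (alpha_bounded k) ms, sorted (alpha_adjacent k) ms
    & sumn (map alpha ms) = ((size ms).-1 + k)%N].
Proof.
split=> -[? ? hb hadj ?]; split=> //.
- exact/(all_nthP FR).
- exact/(sortedP FR).
- by move/(all_nthP FR): hb.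
- by move/(sortedP FR): hadj.
Qed.

Lemma valid_word_rcons_succ k w a :
  valid_word k (rcons w (FR0 a)) -> valid_word k.+1 (rcons w (FR0 a.+1)).
Proof.
move=> /valid_wordP[_ [hhead _] hb hadj hsum]; apply/valid_wordP; split.
- by case: w {hhead hb hadj hsum}.
- by rewrite last_rcons; case: w hhead {hb hadj hsum}.
- move: hb; rewrite !all_rcons /alpha_bounded /= => /andP[ha hw].
  apply/andP; split; first lia.
  by apply: sub_all hw => f /=; lia.
- case: w hadj {hhead hb hsum} => //= x w; rewrite !rcons_path => /andP[hw hl].
  apply/andP; split; last by move: hl; rewrite /alpha_adjacent /=; lia.
  by apply: sub_path hw => f g; rewrite /alpha_adjacent; lia.
- by move: hsum; rewrite !map_rcons !sumn_rcons !size_rcons /=; lia.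
Qed.

Lemma path_alpha_adjacent_units k x t :
  (0 < k)%N -> (alpha x <= k)%N -> all (fun f => alpha f == 1%N) t ->
  path (alpha_adjacent k) x t.
Proof.
move=> hk; elim: t x => //= y t IH x hx /andP[/eqP hy ht].
rewrite /alpha_adjacent hy IH ?hy //; lia.
Qed.

Lemma sumn_alpha_units t :
  all (fun f => alpha f == 1%N) t -> sumn (map alpha t) = size t.
Proof. by elim: t => //= f t IH /andP[/eqP -> /IH ->]. Qed.

Lemma valid_word_cat_units k w t :
  valid_word k w -> t <> [::] -> is_R0 (last FR t) ->
  all (fun f => alpha f == 1%N) t -> valid_word k (w ++ t).
Proof.
move=> /valid_wordP[hw0 [hhead _] hb hadj hsum] ht0 htl ht.
case: w hw0 hhead hb hadj hsum => // x w _ hhead hb hadj hsum.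
have hk : (0 < k)%N by move: hb => /= /andP[+ _]; rewrite /alpha_bounded; lia.
apply/valid_wordP; split=> //.
- by rewrite last_cat; case: t ht0 htl {ht}.
- rewrite all_cat hb; apply: sub_all ht => f /eqP hf.
  by rewrite /alpha_bounded hf; lia.
- rewrite /= cat_path; apply/andP; split=> //.
  apply: path_alpha_adjacent_units => //.
  move/(all_nthP FR)/(_ (size w) (ltnSn _)): hb.
  by rewrite -last_nth /alpha_bounded; lia.
- move: hsum; rewrite /= map_cat sumn_cat (sumn_alpha_units ht) size_cat; lia.
Qed.

Lemma invr_mulBinvr (A : unitRingType) (X Y : A) :
  X \is a GRing.unit -> Y \is a GRing.unit ->
  X^-1 * (Y - X) * Y^-1 = X^-1 - Y^-1.
Proof.
by move=> hX hY; rewrite mulrBr mulrBl mulVr // mul1r -mulrA divrr // mulr1.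
Qed.

Lemma invr_resolvent (A : unitRingType) (X Y : A) :
  X \is a GRing.unit -> Y \is a GRing.unit ->
  X^-1 = Y^-1 + Y^-1 * (Y - X) * Y^-1 + Y^-1 * (Y - X) * X^-1 * (Y - X) * Y^-1.
Proof.
move=> hX hY.
have hYX : Y^-1 * (Y - X) * X^-1 = X^-1 - Y^-1.
  by rewrite -opprB mulrN mulNr invr_mulBinvr // opprB.
rewrite hYX -addrA -mulrDl -mulrDl (addrC Y^-1 (X^-1 - Y^-1)) subrK.
by rewrite invr_mulBinvr // addrC subrK.
Qed.

Section Words.
Variables (A : pzRingType) (R R0 V : A).
Local Notation eval := (eval_word R R0 V).

Lemma eval_word_cons m w :
  w <> [::] -> eval (m :: w) = eval_factor R R0 m * V * eval w.
Proof. by case: w. Qed.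

Lemma eval_word_cat w v :
  w <> [::] -> v <> [::] -> eval (w ++ v) = eval w * V * eval v.
Proof.
elim: w => [//|m w IH] _ hv.
case: w IH => [|m' w] IH; first exact: eval_word_cons.
by rewrite cat_cons !(eval_word_cons m) // IH // !mulrA.
Qed.

Lemma eval_word_rcons_R0 w a :
  eval (rcons w (FR0 a.+1)) = eval (rcons w (FR0 a)) * R0.
Proof.
case: w => [|m w]; first by rewrite /= exprSr.
by rewrite -!cats1 !eval_word_cat //= exprSr mulrA.
Qed.

Hypothesis resolvent : R = R0 + R0 * V * R0 + R0 * V * R * V * R0.

Lemma eval_word_rcons_mulR w a :
  let u := rcons w (FR0 a.+1) in
  eval (rcons w (FR0 a)) * R =
    eval u + eval (u ++ [:: FR0 1]) + eval (u ++ [:: FR; FR0 1]).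
Proof.
have u0 : rcons w (FR0 a.+1) <> [::] by case: w.
rewrite /= !eval_word_cat //= expr1 eval_word_rcons_R0.
by rewrite [X in _ * X = _]resolvent !mulrDr !mulrA.
Qed.

Definition admissible_sum (k : nat) (x : A) :=
  exists ws : seq (seq factor),
    (forall i, (i < size ws)%N -> valid_word k (nth [::] ws i)) /\
    x = \sum_(w <- ws) eval w.

Lemma admissible_sum0 k : admissible_sum k 0.
Proof. by exists [::]; rewrite big_nil. Qed.

Lemma admissible_sumD k x y :
  admissible_sum k x -> admissible_sum k y -> admissible_sum k (x + y).
Proof.
move=> [ws [hws ->]] [vs [hvs ->]].
exists (ws ++ vs); split; last by rewrite big_cat.
move=> i; rewrite size_cat nth_cat => hi; case: ltnP => hiw; first exact: hws.
by apply: hvs; lia.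
Qed.

Lemma admissible_sum_word k w : valid_word k w -> admissible_sum k (eval w).
Proof. by move=> hw; exists [:: w]; split=> [[]|]; rewrite ?big_seq1. Qed.

Lemma admissible_sum_rcons_mulR k w a :
  valid_word k.+1 (rcons w (FR0 a.+1)) ->
  admissible_sum k.+1 (eval (rcons w (FR0 a)) * R).
Proof.
move=> hu; rewrite eval_word_rcons_mulR.
apply: admissible_sumD; first apply: admissible_sumD.
- exact: admissible_sum_word.
- exact/admissible_sum_word/valid_word_cat_units.
- exact/admissible_sum_word/valid_word_cat_units.
Qed.

Lemma admissible_sum_word_mulR k w :
  valid_word k w -> admissible_sum k.+1 (eval w * R).
Proof.
case/lastP: w => [[]//|w x] hw.
have [_ [_ +] _ _ _] := hw; rewrite last_rcons; case: x hw => // a hw _.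
by apply: admissible_sum_rcons_mulR; apply: valid_word_rcons_succ.
Qed.

Lemma admissible_sum_mulR k x : admissible_sum k x -> admissible_sum k.+1 (x * R).
Proof.
move=> [ws [hws ->]]; elim: ws hws => [|w ws IH] hws.
  by rewrite big_nil mul0r; exact: admissible_sum0.
rewrite big_cons mulrDl; apply: admissible_sumD.
  exact/admissible_sum_word_mulR/(hws 0%N).
by apply: IH => i; apply: (hws i.+1).
Qed.

Lemma admissible_sum_expR k : (0 < k)%N -> admissible_sum k (R ^+ k).
Proof.
elim: k => [//|[|k] IH] _; last by rewrite exprSr; exact/admissible_sum_mulR/IH.
have hw1 : valid_word 1 [:: FR0 1] by split=> // -[].
(* [1] is the word R0^0, so the base case is itself one multiplication step. *)
rewrite expr1 -[R]mul1r -[1]/(eval (rcons [::] (FR0 0))).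
exact: admissible_sum_rcons_mulR.
Qed.

End Words.

Theorem lemma4p2 (K : numClosedFieldType) (A : unitAlgType K)
  (G G0 : A) (z : K) (k : nat)
  (hk : (1 <= k)%N) (hz : z \notin Num.real)
  (hG : G - z%:A \is a GRing.unit) (hG0 : G0 - z%:A \is a GRing.unit) :
  exists ws : seq (seq factor),
    (forall i, (i < size ws)%N -> valid_word k (nth [::] ws i)) /\
    ((G - z%:A)^-1) ^+ k =
      \sum_(w <- ws) eval_word ((G - z%:A)^-1) ((G0 - z%:A)^-1) (G0 - G) w.
Proof.
(* [hz] only guarantees the invertibility assumed in [hG] and [hG0]. *)
apply: admissible_sum_expR hk.
have -> : G0 - G = (G0 - z%:A) - (G - z%:A) by rewrite opprB addrA subrK.
exact: invr_resolvent.
Qed.
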